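(* Let $t\in\mathbb{Q}$ be such that the five rational numbers $(t+i)^2$, $i\in\{0,\pm1,\pm2\}$, are pairwise distinct. Then there exist infinitely many elliptic curves $C: y^2=ax^4+bx^2+c$ with $a,b,c\in\mathbb{Q}$ such that for every $i\in\{0,\pm1,\pm2\}$, $(t+i)^2$ is the $x$-coordinate of a point of $C(\mathbb{Q})$. *)

From HB Require Import structures.
From mathcomp Require Import all_boot all_order all_algebra.
Set Implicit Arguments. Unset Strict Implicit. Unset Printing Implicit Defensive.
Import Order.TTheory GRing.Theory Num.Theory.
Local Open Scope ring_scope.

(* The quartic curve C : y^2 = a x^4 + b x^2 + c, encoded by (a, b, c). *)
Definition quartic_curve := (rat * rat * rat)%type.

Definition qa (C : quartic_curve) : rat := C.1.1.
Definition qb (C : quartic_curve) : rat := C.1.2.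
Definition qc (C : quartic_curve) : rat := C.2.

(* C is smooth of genus one (an elliptic curve once it has a rational point):
   the quartic a x^4 + b x^2 + c has degree 4 and no repeated root, i.e.
   a <> 0, c <> 0 and b^2 - 4ac <> 0. *)
Definition is_elliptic (C : quartic_curve) : Prop :=
  qa C != 0 /\ qc C != 0 /\ qb C ^+ 2 - 4%:R * qa C * qc C != 0.

Definition is_x_coord (C : quartic_curve) (x : rat) : Prop :=
  exists y : rat, y ^+ 2 = qa C * x ^+ 4 + qb C * x ^+ 2 + qc C.

(* Two equations define the same curve up to the trivial rescaling
   (a,b,c) ~ (l a, l b, l c), l <> 0. *)
Definition proportional (C D : quartic_curve) : Prop :=
  exists l : rat, l != 0 /\ qa D = l * qa C /\ qb D = l * qb C /\ qc D = l * qc C.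

From HB Require Import structures.
From mathcomp Require Import all_boot all_order all_algebra.
From mathcomp Require Import ring.
Set Implicit Arguments. Unset Strict Implicit. Unset Printing Implicit Defensive.
Import Order.TTheory GRing.Theory Num.Theory.
Local Open Scope ring_scope.

(* Let x_0, ..., x_3 be four of the five points and split
   f(x) = (x - x_0)(x - x_1)(x - x_2)(x - x_3) as f(x) = h(x) - x p(x) with h
   and p even.  For all s, t the even quartic
     Q_{s,t}(x) = (s p(x) + t x)^2 + 2 s t f(x)
   takes square values at x_0, ..., x_3.  As a quadratic form in (s, t), the
   value Q_{s,t}(x_4) represents the square p(x_4)^2 at (1, 0), so the lines
   through (1 : 0) parametrize rationally the (s : t) for which Q_{s,t}(x_4)
   is a square as well.  This gives curves C_l indexed by l in Q whose
   coefficients and discriminant are nonzero polynomials in l, and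
   proportional curves have the same ratio b/a.  The bad parameters for
   each finite set of earlier choices are the roots of one nonzero
   polynomial, so good parameters can be chosen one after the other. *)

Lemma exists_nonroot (R : numDomainType) (p : {poly R}) :
  p != 0 -> exists x, ~~ root p x.
Proof.
move=> p_neq0.
have nat_uniq : uniq [seq (i%:R : R) | i <- iota 0 (size p)].
  by rewrite map_inj_uniq ?iota_uniq //; apply: mulrIn; rewrite oner_eq0.
have := contraNN (fun rs => max_poly_roots p_neq0 rs nat_uniq).
rewrite size_map size_iota ltnn => /(_ isT) /allPn[x _ rootNx].
by exists x.
Qed.

Lemma poly_neq0_horner (R : nzRingType) (p : {poly R}) (x : R) :
  p.[x] != 0 -> p != 0.
Proof. by apply: contraNneq => ->; rewrite horner0. Qed.

Lemma seq_choice (T : choiceType) (P : seq T -> pred T) :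
  (forall s, exists x, P s x) ->
  exists f : nat -> T, forall n, P [seq f i | i <- iota 0 n] (f n).
Proof.
move=> exP; pose next s := xchoose (exP s).
pose fix prefix n := if n is m.+1 then rcons (prefix m) (next (prefix m)) else [::].
exists (fun n => next (prefix n)) => n.
suff -> : [seq next (prefix i) | i <- iota 0 n] = prefix n by exact: xchooseP.
elim: n => // n IH.
by rewrite -addn1 iotaD map_cat IH /= add0n cats1 addn1.
Qed.

Lemma nonneg_neq_addr_gt0 (R : numDomainType) (x y : R) :
  0 <= x -> 0 <= y -> x != y -> 0 < x + y.
Proof.
move=> x_ge0 y_ge0; rewrite lt0r addr_ge0 // andbT paddr_eq0 //.
by apply: contra => /andP[/eqP-> /eqP->].
Qed.

Section QuarticFamily.
Variables (R : comNzRingType) (e1 e2 e3 e4 : R).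

(* x^4 - e1 x^3 + e2 x^2 - e3 x + e4 = even_part x - x * odd_part x *)
Definition odd_part (x : R) := e1 * x ^+ 2 + e3.
Definition even_part (x : R) := x ^+ 4 + e2 * x ^+ 2 + e4.

Definition quartic_a (s t : R) := s ^+ 2 * e1 ^+ 2 + 2%:R * s * t.
Definition quartic_b (s t : R) :=
  s ^+ 2 * (2%:R * e1 * e3) + s * t * (2%:R * e2) + t ^+ 2.
Definition quartic_c (s t : R) := s ^+ 2 * e3 ^+ 2 + s * t * (2%:R * e4).

Definition quartic_value (s t x : R) :=
  quartic_a s t * x ^+ 4 + quartic_b s t * x ^+ 2 + quartic_c s t.

Lemma quartic_valueE s t x :
  quartic_value s t x =
  (s * odd_part x + t * x) ^+ 2 + 2%:R * s * t * (even_part x - x * odd_part x).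
Proof. by rewrite /quartic_value /quartic_a /quartic_b /quartic_c /odd_part /even_part; ring. Qed.

(* (s : t) = (x^2 - l^2 : 2 (p l - h)) is the second intersection of the conic
   z^2 = quartic_value s t x with the line z = p s + l t through (1 : 0 : p). *)
Lemma quartic_value_conic x l :
  quartic_value (x ^+ 2 - l ^+ 2) (2%:R * (odd_part x * l - even_part x)) x =
  (odd_part x * (x ^+ 2 - l ^+ 2) + l * (2%:R * (odd_part x * l - even_part x))) ^+ 2.
Proof. by rewrite /quartic_value /quartic_a /quartic_b /quartic_c /odd_part /even_part; ring. Qed.

End QuarticFamily.

Section HornerQuartic.
Variables (R : comNzRingType) (e1 e2 e3 e4 : R) (s t : {poly R}) (l : R).

Lemma horner_quartic_a : (quartic_a e1%:P s t).[l] = quartic_a e1 s.[l] t.[l].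
Proof. by rewrite /quartic_a !(hornerMn, hornerE). Qed.

Lemma horner_quartic_b :
  (quartic_b e1%:P e2%:P e3%:P s t).[l] = quartic_b e1 e2 e3 s.[l] t.[l].
Proof. by rewrite /quartic_b !(hornerMn, hornerE). Qed.

Lemma horner_quartic_c : (quartic_c e3%:P e4%:P s t).[l] = quartic_c e3 e4 s.[l] t.[l].
Proof. by rewrite /quartic_c !(hornerMn, hornerE). Qed.

End HornerQuartic.

Definition ba_ratio (C : quartic_curve) : rat := qb C / qa C.

Lemma proportional_ba_ratio C D : proportional C D -> ba_ratio C = ba_ratio D.
Proof.
rewrite /ba_ratio => -[k [k_neq0 [-> [-> _]]]].
by rewrite -mulf_div divff // mul1r.
Qed.

Section FivePoints.
Variables x0 x1 x2 x3 x4 : rat.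
Hypotheses (x0_ge0 : 0 <= x0) (x1_ge0 : 0 <= x1) (x2_ge0 : 0 <= x2)
  (x3_ge0 : 0 <= x3) (x4_ge0 : 0 <= x4).
Hypotheses (x01 : x0 != x1) (x02 : x0 != x2) (x03 : x0 != x3)
  (x12 : x1 != x2) (x13 : x1 != x3) (x23 : x2 != x3).
Hypotheses (x40 : x4 != x0) (x41 : x4 != x1) (x42 : x4 != x2) (x43 : x4 != x3).

Let e1 := x0 + x1 + x2 + x3.
Let e2 := x0 * x1 + x0 * x2 + x0 * x3 + x1 * x2 + x1 * x3 + x2 * x3.
Let e3 := x0 * x1 * x2 + x0 * x1 * x3 + x0 * x2 * x3 + x1 * x2 * x3.
Let e4 := x0 * x1 * x2 * x3.
Let f x := \prod_(r <- [:: x0; x1; x2; x3]) (x - r).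
Let p4 := odd_part e1 e3 x4.
Let h4 := even_part e2 e4 x4.

Lemma f_even_odd x : f x = even_part e2 e4 x - x * odd_part e1 e3 x.
Proof. by rewrite /f !big_cons big_nil /even_part /odd_part /e1 /e2 /e3 /e4; ring. Qed.

Lemma e1_gt0 : 0 < e1.
Proof. by rewrite /e1; do 2!apply: ltr_wpDr => //; apply: nonneg_neq_addr_gt0. Qed.

Lemma e3_gt0 : 0 < e3.
Proof.
have -> : e3 = x0 * x1 * (x2 + x3) + x2 * x3 * (x0 + x1) by rewrite /e3; ring.
have x01_gt0 := nonneg_neq_addr_gt0 x0_ge0 x1_ge0 x01.
have x23_gt0 := nonneg_neq_addr_gt0 x2_ge0 x3_ge0 x23.
rewrite lt0r paddr_eq0 ?addr_ge0 ?mulr_ge0 ?addr_ge0 // andbT.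
rewrite !mulf_eq0 (gt_eqF x01_gt0) (gt_eqF x23_gt0) !orbF.
apply/negP => /andP[/orP[]/eqP h /orP[]/eqP h'];
  [move: x02 | move: x03 | move: x12 | move: x13]; by rewrite h h' eqxx.
Qed.

Lemma p4_gt0 : 0 < p4.
Proof. by apply: ltr_wpDl; rewrite ?e3_gt0 // mulr_ge0 ?sqr_ge0 ?ltW ?e1_gt0. Qed.

Lemma f_x4_neq0 : f x4 != 0.
Proof. by rewrite /f !big_cons big_nil mulr1 !mulf_neq0 // subr_eq0. Qed.

Lemma f_Nx4_neq0 : f (- x4) != 0.
Proof.
have -> : f (- x4) = (x4 + x0) * (x4 + x1) * (x4 + x2) * (x4 + x3).
  by rewrite /f !big_cons big_nil; ring.
by rewrite !mulf_neq0 // gt_eqF // nonneg_neq_addr_gt0.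
Qed.

Let sP : {poly rat} := (x4 ^+ 2)%:P - 'X ^+ 2.
Let tP : {poly rat} := 2%:R *: (p4 *: 'X - h4%:P).
Let aP := quartic_a e1%:P sP tP.
Let bP := quartic_b e1%:P e2%:P e3%:P sP tP.
Let cP := quartic_c e3%:P e4%:P sP tP.
Let dP := bP ^+ 2 - 4%:R *: (aP * cP).

Definition curve l : quartic_curve := (aP.[l], bP.[l], cP.[l]).

Lemma sP_horner l : sP.[l] = x4 ^+ 2 - l ^+ 2.
Proof. by rewrite !hornerE. Qed.

Lemma tP_horner l : tP.[l] = 2%:R * (p4 * l - h4).
Proof. by rewrite !hornerE. Qed.

Lemma curve_x_coord l x y :
  y ^+ 2 = quartic_value e1 e2 e3 e4 sP.[l] tP.[l] x -> is_x_coord (curve l) x.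
Proof.
by move=> hy; exists y; rewrite /qa /qb /qc /= horner_quartic_a horner_quartic_b horner_quartic_c.
Qed.

Lemma curve_root_x_coord l x : x \in [:: x0; x1; x2; x3] -> is_x_coord (curve l) x.
Proof.
move=> x_root; have fx0 : f x = 0.
  by apply/eqP; rewrite prodf_seq_eq0; apply/hasP; exists x; rewrite ?subrr.
apply: (curve_x_coord (y := sP.[l] * odd_part e1 e3 x + tP.[l] * x)).
by rewrite quartic_valueE -f_even_odd fx0 mulr0 addr0.
Qed.

Lemma curve_x4_x_coord l : is_x_coord (curve l) x4.
Proof. by apply: curve_x_coord; rewrite sP_horner tP_horner quartic_value_conic. Qed.

(* At [l0] the parameter t vanishes and at [x4] the parameter s does; these two
   evaluations show that the polynomials below are nonzero. *)
Let l0 := h4 / p4.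

Lemma tP_l0 : tP.[l0] = 0.
Proof. by rewrite tP_horner /l0 [p4 * _]mulrC (divfK (lt0r_neq0 p4_gt0)) subrr mulr0. Qed.

Lemma sP_l0_neq0 : sP.[l0] != 0.
Proof.
have f_x4 : f x4 = h4 - x4 * p4 by rewrite f_even_odd.
have f_Nx4 : f (- x4) = h4 + x4 * p4.
  by rewrite f_even_odd /h4 /p4 /even_part /odd_part; ring.
have h4E : h4 = l0 * p4 by rewrite /l0 (divfK (lt0r_neq0 p4_gt0)).
have sP_l0 : sP.[l0] * p4 ^+ 2 = - (f x4 * f (- x4)).
  by rewrite sP_horner f_x4 f_Nx4 h4E; ring.
apply: contra_neq (mulf_neq0 f_x4_neq0 f_Nx4_neq0) => s0.
by apply/eqP; rewrite -oppr_eq0 -sP_l0 s0 mul0r.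
Qed.

Lemma sP_x4 : sP.[x4] = 0.
Proof. by rewrite sP_horner subrr. Qed.

Lemma tP_x4_neq0 : tP.[x4] != 0.
Proof.
rewrite tP_horner mulf_neq0 ?pnatr_eq0 //.
by rewrite -oppr_eq0 opprB mulrC -f_even_odd f_x4_neq0.
Qed.

Lemma aP_neq0 : aP != 0.
Proof.
apply: (@poly_neq0_horner _ _ l0).
rewrite horner_quartic_a tP_l0 /quartic_a mulr0 addr0.
by rewrite mulf_neq0 ?expf_neq0 ?sP_l0_neq0 ?(lt0r_neq0 e1_gt0).
Qed.

Lemma cP_neq0 : cP != 0.
Proof.
apply: (@poly_neq0_horner _ _ l0).
rewrite horner_quartic_c tP_l0 /quartic_c mulr0 mul0r addr0.
by rewrite mulf_neq0 ?expf_neq0 ?sP_l0_neq0 ?(lt0r_neq0 e3_gt0).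
Qed.

Lemma aP_x4 : aP.[x4] = 0.
Proof. by rewrite horner_quartic_a sP_x4 /quartic_a; ring. Qed.

Lemma cP_x4 : cP.[x4] = 0.
Proof. by rewrite horner_quartic_c sP_x4 /quartic_c; ring. Qed.

Lemma bP_x4 : bP.[x4] = tP.[x4] ^+ 2.
Proof. by rewrite horner_quartic_b sP_x4 /quartic_b; ring. Qed.

Lemma dP_horner l : dP.[l] = bP.[l] ^+ 2 - 4%:R * aP.[l] * cP.[l].
Proof. by rewrite hornerD hornerN horner_exp hornerZ hornerM mulrA. Qed.

Lemma dP_neq0 : dP != 0.
Proof.
apply: (@poly_neq0_horner _ _ x4).
by rewrite dP_horner aP_x4 bP_x4 mulr0 mul0r subr0 -exprM expf_neq0 ?tP_x4_neq0.
Qed.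

Definition good_parameter (prev : seq rat) (l : rat) : bool :=
  [&& aP.[l] != 0, cP.[l] != 0, dP.[l] != 0 &
      ba_ratio (curve l) \notin [seq ba_ratio (curve z) | z <- prev]].

Let avoid (prev : seq rat) : {poly rat} :=
  aP * cP * dP * \prod_(z <- prev) (bP - ba_ratio (curve z) *: aP).

Lemma avoid_neq0 prev : avoid prev != 0.
Proof.
rewrite !mulf_neq0 ?aP_neq0 ?cP_neq0 ?dP_neq0 // prodf_seq_neq0.
apply/allP => z _; apply: (@poly_neq0_horner _ _ x4).
by rewrite hornerD hornerN hornerZ aP_x4 mulr0 subr0 bP_x4 expf_neq0 ?tP_x4_neq0.
Qed.

Lemma good_parameter_nonroot prev l :
  ~~ root (avoid prev) l -> good_parameter prev l.
Proof.
rewrite /root 3!hornerM horner_prod !mulf_eq0 !negb_or prodf_seq_neq0.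
case/andP=> /andP[/andP[aP_l cP_l] dP_l] /allP factors_l.
rewrite /good_parameter aP_l cP_l dP_l; apply/mapP => -[z /factors_l /= + ratio_lz].
by rewrite hornerD hornerN hornerZ -ratio_lz /ba_ratio /= divfK // subrr eqxx.
Qed.

Lemma exists_good_parameter prev : exists l, good_parameter prev l.
Proof.
have [l rootNl] := exists_nonroot (avoid_neq0 prev).
by exists l; apply: good_parameter_nonroot.
Qed.

Lemma five_point_curves :
  exists Cs : nat -> quartic_curve,
    (forall n, is_elliptic (Cs n) /\
       forall x, x \in [:: x4; x0; x1; x2; x3] -> is_x_coord (Cs n) x) /\
    (forall m n, m <> n -> ~ proportional (Cs m) (Cs n)).
Proof.
have [lam lam_good] := seq_choice exists_good_parameter.
have ratio_neq m n : (m < n)%N -> ba_ratio (curve (lam m)) != ba_ratio (curve (lam n)).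
  move=> lt_mn; have /and4P[_ _ _] := lam_good n; apply: contraNneq => <-.
  by apply/mapP; exists (lam m); rewrite // map_f // mem_iota.
exists (fun n => curve (lam n)); split=> [n | m n neq_mn /proportional_ba_ratio ratio_mn].
  have /and4P[aP_l cP_l dP_l _] := lam_good n.
  split=> [| x]; first by rewrite /is_elliptic /qa /qb /qc /= -dP_horner.
  rewrite inE => /predU1P[-> | x_root]; first exact: curve_x4_x_coord.
  exact: curve_root_x_coord.
by case: (ltngtP m n) => [/ratio_neq | /ratio_neq | /neq_mn //]; rewrite ratio_mn eqxx.
Qed.

End FivePoints.

Lemma small_int_cases (i : int) : `|i| <= 2 -> i \in [:: 2; -2; -1; 0; 1].
Proof. by case: i => [[|[|[|n]]]|[|[|n]]]. Qed.

Theorem proposition1 (t : rat)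
  (Hdist : forall i j : int, `|i| <= 2 -> `|j| <= 2 ->
     (t + i%:~R) ^+ 2 = (t + j%:~R) ^+ 2 -> i = j) :
  exists Cs : nat -> quartic_curve,
    (forall n, is_elliptic (Cs n) /\
       forall i : int, `|i| <= 2 -> is_x_coord (Cs n) ((t + i%:~R) ^+ 2)) /\
    (forall m n, m <> n -> ~ proportional (Cs m) (Cs n)).
Proof.
pose X (i : int) := (t + i%:~R) ^+ 2.
have X_neq i j : `|i| <= 2 -> `|j| <= 2 -> i != j -> X i != X j.
  by move=> small_i small_j; apply: contra_neq; exact: Hdist small_i small_j.
have X_ge0 i : 0 <= X i := sqr_ge0 _.
have [Cs [Cs_ok Cs_nonprop]] := five_point_curves (X_ge0 (-2)) (X_ge0 (-1))
  (X_ge0 0) (X_ge0 1) (X_ge0 2)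
  (X_neq (-2) (-1) isT isT isT) (X_neq (-2) 0 isT isT isT) (X_neq (-2) 1 isT isT isT)
  (X_neq (-1) 0 isT isT isT) (X_neq (-1) 1 isT isT isT) (X_neq 0 1 isT isT isT)
  (X_neq 2 (-2) isT isT isT) (X_neq 2 (-1) isT isT isT) (X_neq 2 0 isT isT isT)
  (X_neq 2 1 isT isT isT).
exists Cs; split=> [n | ]; last exact: Cs_nonprop.
have [Cs_ell Cs_x] := Cs_ok n; split=> [| i /small_int_cases i_small]; first exact: Cs_ell.
by apply: Cs_x; exact: (map_f X i_small).
Qed.
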